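(* Let $k\ge1$ and let $\sigma=\sigma_1\sigma_2\cdots\sigma_k\in\mathfrak S_k$ be a consecutive pattern. Let $1\text{-}\sigma$ denote the generalized pattern $1\text{-}(\sigma_1+1)(\sigma_2+1)\cdots(\sigma_k+1)$ of length $k+1$. Then, as formal power series, $$A_{1\text{-}\sigma}(z)=\exp\left(\int_0^z A_\sigma(t)\,dt\right).$$
   Context: $\mathfrak S_n$ is the symmetric group on $\{1,\dots,n\}$, permutations written in one-line notation $\pi=\pi_1\cdots\pi_n$. A generalized pattern of length $m$ is a permutation $\sigma_1\cdots\sigma_m\in\mathfrak S_m$ together with, for each $j=1,\dots,m-1$, a choice of either inserting a dash ''-'' between $\sigma_j$ and $\sigma_{j+1}$ or not; write it $\sigma_1\varepsilon_1\sigma_2\cdots\varepsilon_{m-1}\sigma_m$ with each $\varepsilon_j$ either ''-'' or empty. A permutation $\pi\in\mathfrak S_n$ contains this pattern if there are indices $i_1<\dots<i_m$ such that (i) whenever $\varepsilon_j$ is empty, $i_{j+1}=i_j+1$, and (ii) for all $a,b$, $\pi_{i_a}<\pi_{i_b}$ iff $\sigma_a<\sigma_b$. Otherwise $\pi$ avoids it. A consecutive pattern is one with no dashes (an occurrence must occupy adjacent positions). For a generalized pattern $\sigma$, $\alpha_n(\sigma)$ is the number of permutations in $\mathfrak S_n$ avoiding $\sigma$ (with $\alpha_0(\sigma)=1$ for the empty permutation), and $A_\sigma(z)=\sum_{n\ge0}\alpha_n(\sigma)z^n/n!$ is its exponential generating function. *)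

From mathcomp Require Import all_boot all_order all_fingroup all_algebra.
Set Implicit Arguments. Unset Strict Implicit. Unset Printing Implicit Defensive.
Import GRing.Theory Num.Theory.

(* A generalized pattern of length m: a permutation sg : 'S_m (one-line
   notation sg_j = sg j, positions 0-indexed) together with [adj], where
   [adj j = true] means there is NO dash between positions j and j+1
   (so the occurrence must use adjacent positions there). *)

Definition contains (n m : nat) (pi : 'S_n) (sg : 'S_m) (adj : nat -> bool) : bool :=
  [exists f : {ffun 'I_m -> 'I_n},
    [forall a : 'I_m, forall b : 'I_m,
      [&& (a < b) ==> (f a < f b),
          ((b == a.+1 :> nat) && adj a) ==> (val (f b) == (f a).+1) &
          (pi (f a) < pi (f b)) == (sg a < sg b)]]].

Definition alpha (m : nat) (sg : 'S_m) (adj : nat -> bool) (n : nat) : nat :=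
  #|[set pi : 'S_n | ~~ contains pi sg adj]|.

Definition consec_adj : nat -> bool := fun _ => true.

(* the pattern 1-(sg_1+1)...(sg_k+1): a dash only between positions 0 and 1 *)
Definition one_dash_adj : nat -> bool := fun j => j != 0.

Definition one_dash_fun (k : nat) (s : 'S_k) (i : 'I_k.+1) : 'I_k.+1 :=
  if unlift ord0 i is Some j then lift ord0 (s j) else ord0.

Lemma one_dash_inj (k : nat) (s : 'S_k) : injective (one_dash_fun s).
Proof.
move=> i j; rewrite /one_dash_fun.
case: (unliftP ord0 i) => [i' -> | ->]; case: (unliftP ord0 j) => [j' -> | ->] //;
  rewrite ?liftK ?unlift_none //.
by move/lift_inj/perm_inj ->.
Qed.

Definition one_dash (k : nat) (s : 'S_k) : 'S_k.+1 := perm (@one_dash_inj k s).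

Local Open Scope ring_scope.

Definition fps := nat -> rat.
Definition fps_one : fps := fun n => (n == 0)%:R.
Definition fps_mul (F G : fps) : fps :=
  fun n => \sum_(i < n.+1) F i * G (n - i)%N.
Definition fps_pow (F : fps) (j : nat) : fps := iter j (fps_mul F) fps_one.
Definition fps_int (F : fps) : fps :=
  fun n => if n is m.+1 then F m / (m.+1)%:R else 0.
(* exp(F) = sum_j F^j / j!, for F with zero constant term (then the
   coefficient of z^n only receives contributions from j <= n). *)
Definition fps_exp (F : fps) : fps :=
  fun n => \sum_(j < n.+1) fps_pow F j n / (j`!)%:R.
Definition egf (a : nat -> nat) : fps := fun n => (a n)%:R / (n`!)%:R.

(* A permutation of 0..n splits around its minimal entry 0 as u 0 w.  It avoids
   1-σ iff u avoids 1-σ and w avoids σ: an occurrence of σ inside w extends by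
   the entry 0 to one of 1-σ, while an occurrence of σ at consecutive positions
   covering 0 is not preceded by a smaller entry.  Both avoidance properties only
   depend on relative order, so summing over the set of entries of w gives
     a(n+1) = Σ_i C(n,i) b(i) a(n-i),
   i.e. A' = B A and A(0) = 1 for the exponential generating functions, whose
   unique solution is A = exp(∫ B). *)

From mathcomp Require Import all_boot all_order all_fingroup all_algebra.
From mathcomp Require Import zify ring.
From Stdlib Require Import FunctionalExtensionality.
Set Implicit Arguments. Unset Strict Implicit. Unset Printing Implicit Defensive.
Import GRing.Theory Num.Theory.

Definition perm_seq n (pi : 'S_n) : seq nat := [seq val (pi i) | i <- enum 'I_n].

Lemma size_perm_seq n (pi : 'S_n) : size (perm_seq pi) = n.
Proof. by rewrite size_map size_enum_ord. Qed.

Lemma nth_perm_seq n (pi : 'S_n) (i : 'I_n) : nth 0 (perm_seq pi) i = pi i.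
Proof. by rewrite (nth_map i) ?nth_ord_enum // size_enum_ord. Qed.

Lemma perm_seq_inj n : injective (@perm_seq n).
Proof.
move=> pi1 pi2 e; apply/permP => i; apply: val_inj.
by have := nth_perm_seq pi1 i; rewrite e nth_perm_seq.
Qed.

Lemma perm_seq_iota n (pi : 'S_n) : perm_eq (perm_seq pi) (iota 0 n).
Proof.
have -> : perm_seq pi = map val (map pi (enum 'I_n)) by rewrite -map_comp.
rewrite -val_enum_ord; apply: perm_map.
apply: uniq_perm; rewrite ?(map_inj_uniq (@perm_inj _ pi)) ?enum_uniq //.
by move=> i; rewrite mem_enum; apply/mapP; exists ((pi^-1)%g i); rewrite ?mem_enum ?permKV.
Qed.

Lemma perm_seq_surj n (t : seq nat) : perm_eq t (iota 0 n) -> exists pi : 'S_n, perm_seq pi = t.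
Proof.
move=> ht; have size_t : size t = n by rewrite (perm_size ht) size_iota.
have lt_t (i : 'I_n) : nth 0 t i < n.
  by have := @mem_nth _ 0 t i; rewrite size_t ltn_ord (perm_mem ht) mem_iota => /(_ isT).
have inj : injective (fun i => Ordinal (lt_t i)).
  move=> i j [] /eqP; rewrite nth_uniq ?size_t ?(perm_uniq ht) ?iota_uniq // => /eqP.
  exact: val_inj.
exists (perm inj); apply: (@eq_from_nth _ 0); rewrite ?size_perm_seq // => i hi.
by rewrite (nth_perm_seq _ (Ordinal hi)) permE.
Qed.

Lemma perm_seq_enum n : perm_eq (map (@perm_seq n) (enum 'S_n)) (permutations (iota 0 n)).
Proof.
apply: uniq_perm; rewrite ?permutations_uniq ?(map_inj_uniq (@perm_seq_inj n)) ?enum_uniq //.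
move=> t; rewrite mem_permutations; apply/mapP/idP => [[pi _ ->]|/perm_seq_surj [pi <-]].
  exact: perm_seq_iota.
by exists pi; rewrite ?mem_enum.
Qed.

Lemma alpha_count_permutations m (sg : 'S_m) adj (P : pred (seq nat)) n :
  (forall pi : 'S_n, contains pi sg adj = P (perm_seq pi)) ->
  alpha sg adj n = count (predC P) (permutations (iota 0 n)).
Proof.
move=> hP; rewrite /alpha unlock /= size_filter -enumT.
rewrite (eq_count (a2 := predC P \o @perm_seq n)) => [|pi]; last by rewrite /= inE hP.
by rewrite -count_map (seq.permP (perm_seq_enum n)).
Qed.

Section Occurrences.
Variables (k : nat) (s : 'S_k).

Definition occurs_at (t : seq nat) (i : nat) : bool :=
  (i + k <= size t) &&
  [forall a : 'I_k, forall b : 'I_k, (nth 0 t (i + a) < nth 0 t (i + b)) == (s a < s b)].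

Definition occurs_consec (t : seq nat) : bool := has (occurs_at t) (iota 0 (size t).+1).

Definition below_window (t : seq nat) (p i : nat) : bool :=
  [forall a : 'I_k, nth 0 t p < nth 0 t (i + a)].

(* Containment of 1-σ: an occurrence of σ at consecutive positions i, ..., i+k-1
   preceded by an entry smaller than all of them. *)
Definition occurs_dash (t : seq nat) : bool :=
  has (fun i => occurs_at t i && has (below_window t ^~ i) (iota 0 i)) (iota 0 (size t).+1).

Lemma occurs_consecP t : reflect (exists i, occurs_at t i) (occurs_consec t).
Proof.
apply: (iffP hasP) => [[i _ h]|[i h]]; first by exists i.
by exists i; rewrite // mem_iota ltnS; case/andP: h; lia.
Qed.

Lemma occurs_dashP t :
  reflect (exists p i, [/\ p < i, occurs_at t i & below_window t p i]) (occurs_dash t).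
Proof.
apply: (iffP hasP) => [[i _ /andP[h /hasP[p]]]|[p [i [hp h hl]]]].
  by rewrite mem_iota => /andP[_ hp] hl; exists p, i.
exists i; first by rewrite mem_iota ltnS; case/andP: h; lia.
by rewrite h; apply/hasP; exists p; rewrite // mem_iota.
Qed.

Lemma occurs_at_catl u v i : i + k <= size u -> occurs_at (u ++ v) i = occurs_at u i.
Proof.
move=> h; rewrite /occurs_at size_cat h (leq_trans h (leq_addr _ _)) /=.
apply: eq_forallb => a; apply: eq_forallb => b.
by rewrite !nth_cat (leq_trans _ h) ?(leq_trans _ h) // ltn_add2l.
Qed.

Lemma occurs_at_catr u v i : occurs_at (u ++ v) (size u + i) = occurs_at v i.
Proof.
rewrite /occurs_at size_cat -addnA leq_add2l; congr (_ && _).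
apply: eq_forallb => a; apply: eq_forallb => b.
by rewrite !nth_cat -!addnA !ltnNge !leq_addr /= !addKn.
Qed.

Lemma below_window_catl u v p i :
  p < size u -> i + k <= size u -> below_window (u ++ v) p i = below_window u p i.
Proof.
move=> hp hi; apply: eq_forallb => a.
by rewrite !nth_cat hp (leq_trans _ hi) // ltn_add2l.
Qed.

Lemma below_window_min (t : seq nat) m p i j :
  {in t, forall x, m <= x} -> nth 0 t j = m -> i <= j < i + k -> p < size t ->
  ~~ below_window t p i.
Proof.
move=> tm tj hj hp; have hji : j - i < k by lia.
apply/forallP => /(_ (Ordinal hji)); rewrite /= subnKC; last by lia.
by rewrite tj ltnNge tm ?mem_nth.
Qed.

Lemma occurs_dash_cat_min (u w : seq nat) m : {in u ++ w, forall x, m < x} ->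
  occurs_dash (u ++ m :: w) = occurs_dash u || occurs_consec w.
Proof.
move=> um; have t_m : nth 0 (u ++ m :: w) (size u) = m by rewrite nth_cat ltnn subnn.
have m_min : {in u ++ m :: w, forall x, m <= x}.
  by move=> x; rewrite mem_cat inE orbCA -mem_cat => /orP[/eqP->|/um/ltnW].
apply/occurs_dashP/orP => [[p [i [hp hi hl]]]|].
  case: (leqP (i + k) (size u)) => [hiu|ui].
    left; apply/occurs_dashP; exists p, i.
    by split=> //; [rewrite -(occurs_at_catl (m :: w)) | rewrite -(below_window_catl (m :: w))];
      lia.
  case: (ltnP (size u) i) => [hiu|ui'].
    right; apply/occurs_consecP; exists (i - (size u).+1).
    by rewrite -(occurs_at_catr [:: m]) -(occurs_at_catr u) addnA addn1 subnKC.
  have hpt : p < size (u ++ m :: w) by case/andP: hi; rewrite size_cat /=; lia.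
  by rewrite (negbTE (below_window_min m_min t_m _ hpt)) in hl; lia.
case=> [/occurs_dashP [p [i [hp hi hl]]]|/occurs_consecP [i hi]].
  have hiu : i + k <= size u by case/andP: hi.
  by exists p, i; rewrite occurs_at_catl // below_window_catl //; lia.
exists (size u), (size u + (1 + i)); split; first by lia.
  by rewrite occurs_at_catr -cat1s occurs_at_catr.
apply/forallP => a; rewrite t_m nth_cat -!addnA [_ < size u]ltnNge leq_addr /= addKn add1n /=.
apply: um; rewrite mem_cat mem_nth ?orbT //.
by case/andP: hi => hi _; apply: leq_trans hi; rewrite ltn_add2l.
Qed.

Section Relabelling.
Variables (f : nat -> nat) (t : seq nat).
Hypothesis f_mono : {in t &, {mono f : x y / x < y}}.

Lemma occurs_at_map i : occurs_at (map f t) i = occurs_at t i.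
Proof.
rewrite /occurs_at size_map; case: leqP => //= hi.
apply: eq_forallb => a; apply: eq_forallb => b.
have lt_t (c : 'I_k) : i + c < size t by apply: leq_trans hi; rewrite ltn_add2l.
by rewrite !(nth_map 0) // f_mono ?mem_nth.
Qed.

Lemma below_window_map p i : p < i -> i + k <= size t ->
  below_window (map f t) p i = below_window t p i.
Proof.
move=> hp hi; apply: eq_forallb => a.
have lt_t : i + a < size t by apply: leq_trans hi; rewrite ltn_add2l.
have lt_p : p < size t by lia.
by rewrite !(nth_map 0) // f_mono ?mem_nth.
Qed.

Lemma occurs_consec_map : occurs_consec (map f t) = occurs_consec t.
Proof. by apply/occurs_consecP/occurs_consecP => -[i]; exists i; rewrite ?occurs_at_map in p *. Qed.

Lemma occurs_dash_map : occurs_dash (map f t) = occurs_dash t.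
Proof.
apply/occurs_dashP/occurs_dashP => -[p [i [hp hi hl]]]; exists p, i;
  rewrite occurs_at_map in hi *; have /andP[hik _] := hi;
  by rewrite below_window_map in hl *.
Qed.

End Relabelling.

End Occurrences.

Definition order_invariant (P : pred (seq nat)) : Prop :=
  forall f t, {in t &, {mono f : x y / x < y}} -> P (map f t) = P t.

Lemma permutations_map (T1 T2 : eqType) (g : T1 -> T2) (h : T2 -> T1) (s : seq T1) :
  {in s, cancel g h} -> perm_eq (permutations (map g s)) (map (map g) (permutations s)).
Proof.
move=> gK; have map_gK t : perm_eq t s -> map h (map g t) = t.
  by move=> st; rewrite -map_comp map_id_in // => x; rewrite (perm_mem st) => /gK.
apply: uniq_perm; rewrite ?permutations_uniq //.
  rewrite map_inj_in_uniq ?permutations_uniq // => t1 t2.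
  by rewrite !mem_permutations => /map_gK {2}<- /map_gK {2}<- ->.
move=> u; rewrite mem_permutations; apply/idP/mapP => [gs_u|[t]]; last first.
  by rewrite mem_permutations => st ->; apply: perm_map.
exists (map h u); last first.
  rewrite -map_comp map_id_in // => y; rewrite (perm_mem gs_u) => /mapP[x sx ->] /=.
  by rewrite gK.
by rewrite mem_permutations -(map_gK s (perm_refl s)) perm_map.
Qed.

Lemma count_permutations_invariant P (V : seq nat) : order_invariant P -> uniq V ->
  count P (permutations V) = count P (permutations (iota 0 (size V))).
Proof.
move=> invP uV; set n := size V; set sV := sort leq V.
have size_sV : size sV = n by rewrite size_sort.
have sV_lt : sorted ltn sV by rewrite ltn_sorted_uniq_leq sort_uniq uV (sort_sorted leq_total).
(* Relabel along the increasing bijection from 0..n-1 onto the entries of V. *)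
pose g := nth 0 sV.
have g_mono : {in iota 0 n &, {mono g : x y / x < y}}.
  have := leqW_mono_in (leq_mono_in (sorted_ltn_nth ltn_trans 0 sV_lt)).
  by move=> mono x y; rewrite !mem_iota => hx hy; apply: mono; rewrite inE size_sV; lia.
have gK : {in iota 0 n, cancel g (index ^~ sV)}.
  by move=> x; rewrite mem_iota => hx; rewrite index_uniq ?size_sV ?sort_uniq //; lia.
have g_iota : map g (iota 0 n) = sV by rewrite -size_sV -/(mkseq _ _) mkseq_nth.
rewrite -(seq.permP (perm_permutations (permEl (perm_sort leq V)))) -/sV -g_iota.
rewrite (seq.permP (permutations_map gK)) count_map; apply: eq_in_count => t.
rewrite mem_permutations => st; apply: invP => x y hx hy.
by apply: g_mono; rewrite -(perm_mem st).
Qed.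

Lemma count_sum_fibers (T K : eqType) (P : pred T) (key : T -> K) (keys : seq K) (L : seq T) :
  uniq keys -> {in L, forall t, key t \in keys} ->
  count P L = \sum_(q <- keys) count (fun t => P t && (key t == q)) L.
Proof.
move=> uk; elim: L => [|x L IHL] hL /=; first by rewrite big1.
rewrite big_split /= IHL => [|t tL]; last by apply: hL; rewrite inE tL orbT.
congr (_ + _); rewrite (bigD1_seq (key x)) ?hL ?inE ?eqxx //= andbT big1 ?addn0 //.
by move=> q /negbTE; rewrite eq_sym => ->; rewrite andbF.
Qed.

Lemma count_allpairs (S T U : eqType) (f : S -> T -> U)
    (P : pred U) (P1 : pred S) (P2 : pred T) s t :
  {in s & t, forall x y, P (f x y) = P1 x && P2 y} ->
  count P [seq f x y | x <- s, y <- t] = count P1 s * count P2 t.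
Proof.
elim: s => [|x s IHs] //= h; rewrite count_cat IHs => [|a b ha hb]; last first.
  by apply: h; rewrite ?inE ?ha ?orbT.
rewrite mulnDl count_map; congr (_ + _).
rewrite (@eq_in_count _ _ (fun y => P1 x && P2 y)) => [|y yt]; last by apply: h; rewrite ?inE ?eqxx.
by case: (P1 x); rewrite ?mul1n ?mul0n ?count_pred0.
Qed.

Fixpoint bipartitions (R : seq nat) : seq (seq nat * seq nat) :=
  if R is x :: R' then
    [seq (x :: q.1, q.2) | q <- bipartitions R'] ++ [seq (q.1, x :: q.2) | q <- bipartitions R']
  else [:: ([::], [::])].

Lemma bipartitions_perm R q : q \in bipartitions R -> perm_eq (q.1 ++ q.2) R.
Proof.
elim: R q => [|x R IHR] [A B] /=; first by rewrite inE => /eqP [-> ->].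
rewrite mem_cat => /orP[] /mapP [[A' B'] /IHR h [-> ->]] /=; first by rewrite perm_cons.
by rewrite -cat1s perm_catCA /= perm_cons.
Qed.

Lemma filter_bipartition R (a : pred nat) : (filter (predC a) R, filter a R) \in bipartitions R.
Proof.
elim: R => [|x R IHR] /=; first by rewrite inE.
rewrite mem_cat; case: (a x) => /=; apply/orP; [right | left];
  by apply/mapP; exists (filter (predC a) R, filter a R).
Qed.

Lemma bipartitionE R q : uniq R -> q \in bipartitions R ->
  q = (filter (predC (mem q.2)) R, filter (mem q.2) R).
Proof.
case: q => A B /=; elim: R A B => [|x R IHR] A B /=; first by rewrite inE => _ /eqP [-> ->].
move=> /andP[xR uR]; rewrite mem_cat => /orP[] /mapP [[A' B'] hq [-> ->]] /=;
  have [eA eB] := IHR _ _ uR hq.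
  have xB : x \notin B'.
    by apply: contra xR; rewrite -(perm_mem (bipartitions_perm hq)) mem_cat orbC => ->.
  by rewrite (negbTE xB) /= [in LHS]eB [in LHS]eA.
have xB'_B' : {in R, forall y, (y \in x :: B') = (y \in B')}.
  by move=> y yR; rewrite inE; case: eqP => // eyx; rewrite -eyx yR in xR.
rewrite inE eqxx /= (@eq_in_filter _ (mem (x :: B')) (mem B') R xB'_B').
rewrite (@eq_in_filter _ (predC (mem (x :: B'))) (predC (mem B')) R) => [|y /xB'_B' /= ->] //.
by rewrite [in LHS]eB [in LHS]eA.
Qed.

Lemma bipartitions_uniq R : uniq R -> uniq (bipartitions R).
Proof.
elim: R => [|x R IHR] //= /andP[xR uR].
rewrite cat_uniq !map_inj_uniq ?IHR // => [|[a b] [c d] /= [-> ->] //|[a b] [c d] /= [-> ->] //].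
rewrite andbT; apply/hasPn => _ /mapP [[A B] hq ->]; apply/mapP => -[[A' B'] _ [eA _]].
have := perm_mem (bipartitions_perm hq) x; rewrite /= eA mem_cat inE eqxx /=.
by move=> h; rewrite -h in xR.
Qed.

Section ConsDecomposition.
Variables (m : nat) (R : seq nat).
Hypothesis uniq_mR : uniq (m :: R).

Definition split_around (t : seq nat) : seq nat * seq nat :=
  let w := drop (index m t).+1 t in (filter (predC (mem w)) R, filter (mem w) R).

Lemma split_around_cat u w : m \notin u ->
  split_around (u ++ m :: w) = (filter (predC (mem w)) R, filter (mem w) R).
Proof.
move=> mu; rewrite /split_around index_cat (negbTE mu) /= eqxx addn0.
by rewrite -cat_rcons drop_size_cat // size_rcons.
Qed.

Lemma fiber_split_around q : q \in bipartitions R ->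
  perm_eq (filter (fun t => split_around t == q) (permutations (m :: R)))
          [seq u ++ m :: w | u <- permutations q.1, w <- permutations q.2].
Proof.
move=> hq; have /andP[mR uR] := uniq_mR.
have m_notin u w : perm_eq (u ++ w) R -> m \notin u.
  by move=> uwR; apply: contra mR => mu; rewrite -(perm_mem uwR) mem_cat mu.
apply: uniq_perm.
- by rewrite filter_uniq ?permutations_uniq.
- apply: allpairs_uniq; rewrite ?permutations_uniq // => -[u1 w1] [u2 w2].
  move=> /allpairsP [[a b] [ha hb [-> ->]]] /allpairsP [[c d] [hc hd [-> ->]]] /= e.
  move: ha hc; rewrite !mem_permutations => ha hc.
  move/eqP: e; rewrite eqseq_cat; last by rewrite (perm_size ha) (perm_size hc).
  by case/andP => /eqP -> /eqP [->].
move=> t; rewrite mem_filter mem_permutations; apply/andP/allpairsP => [[/eqP tq mR_t]|].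
  have mt : m \in t by rewrite (perm_mem mR_t) inE eqxx.
  case/splitPr: mt tq mR_t => u w tq mR_t.
  have uwR : perm_eq (u ++ w) R.
    by rewrite -(perm_cons m) -[m :: _]/([:: m] ++ u ++ w) perm_catCA.
  rewrite split_around_cat ?(m_notin u w) // in tq.
  have : uniq (u ++ w) by rewrite (perm_uniq uwR).
  rewrite cat_uniq => /and3P [uu /hasPn disj_uw uw].
  exists (u, w); rewrite -tq !mem_permutations; split => //=;
    apply: uniq_perm; rewrite ?filter_uniq // => x; rewrite mem_filter /= -(perm_mem uwR) mem_cat;
    case xu: (x \in u); case xw: (x \in w) => //=.
  by have := disj_uw x xw; rewrite xu.
case=> -[u w] [/=]; rewrite !mem_permutations => uq1 wq2 ->.
have uwR : perm_eq (u ++ w) R by apply: perm_trans (bipartitions_perm hq); apply: perm_cat.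
rewrite split_around_cat ?(m_notin u w) // -cat1s perm_catCA /= perm_cons uwR.
split=> //; apply/eqP; rewrite [RHS](bipartitionE _ hq) //.
by congr (_, _); apply: eq_filter => x /=; rewrite (perm_mem wq2).
Qed.

Lemma count_permutations_cons (P P1 P2 : pred (seq nat)) :
  (forall u w, perm_eq (u ++ w) R -> P (u ++ m :: w) = P1 u && P2 w) ->
  count P (permutations (m :: R)) =
  \sum_(q <- bipartitions R) count P1 (permutations q.1) * count P2 (permutations q.2).
Proof.
move=> hP; have /andP[_ uR] := uniq_mR.
rewrite (@count_sum_fibers _ _ P split_around (bipartitions R)) ?bipartitions_uniq //;
  last by move=> t _; apply: filter_bipartition.
apply: eq_big_seq => q hq; rewrite -count_filter (seq.permP (fiber_split_around hq)).
apply: count_allpairs => u w; rewrite !mem_permutations => uq1 wq2.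
by apply: hP; apply: perm_trans (bipartitions_perm hq); apply: perm_cat.
Qed.

End ConsDecomposition.

Lemma sum_binomial_succ n (G : nat -> nat) :
  \sum_(j < n.+2) 'C(n.+1, j) * G j =
  \sum_(j < n.+1) 'C(n, j) * G j + \sum_(j < n.+1) 'C(n, j) * G j.+1.
Proof.
rewrite big_ord_recl [X in _ = X + _]big_ord_recl !bin0 !mul1n.
under eq_bigr do rewrite lift0 binS mulnDl.
rewrite big_split big_ord_recr /= bin_small // mul0n addn0.
by rewrite -!addnA; congr (_ + _); rewrite addnC.
Qed.

Lemma sum_bipartitions R (G : nat -> nat) :
  \sum_(q <- bipartitions R) G (size q.2) = \sum_(j < (size R).+1) 'C(size R, j) * G j.
Proof.
elim: R G => [|x R IHR] G; first by rewrite big_cons big_nil big_ord1 mul1n addn0.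
by rewrite /= big_cat !big_map /= (IHR G) (IHR (fun j => G j.+1)) sum_binomial_succ.
Qed.

Lemma consecutive_values (g : nat -> nat) lo hi :
  (forall j, lo <= j -> j.+1 < hi -> g j.+1 = (g j).+1) ->
  forall j, lo <= j < hi -> g j = g lo + (j - lo).
Proof.
move=> g_succ j /andP[]; elim: j => [|j IHj] lo_j j_hi.
  by move: lo_j; rewrite leqn0 => /eqP ->; rewrite addn0.
case: (leqP lo j) => [lo_j' | j_lo]; first by rewrite g_succ // IHj; lia.
have -> : lo = j.+1 by lia.
by rewrite subnn addn0.
Qed.

Section Translation.
Variables (k : nat) (s : 'S_k.+1).

Lemma contains_consec n (pi : 'S_n) : contains pi s consec_adj = occurs_consec s (perm_seq pi).
Proof.
apply/existsP/occurs_consecP => [[f /forallP occ_f]|[i /andP[hi occ_i]]].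
  pose g j := val (f (inord j)).
  have f_val (a : 'I_k.+1) : val (f a) = g 0 + a.
    rewrite -[a in LHS]inord_val -/(g a) (@consecutive_values g 0 k.+1) ?subn0 ?ltn_ord //.
    move=> j _ hj.
    have /forallP /(_ (inord j.+1)) := occ_f (inord j).
    by rewrite !inordK ?(ltnW hj) ?eqxx //= => /and3P [_ /eqP].
  exists (g 0); apply/andP; split.
    by rewrite size_perm_seq; have := ltn_ord (f ord_max); rewrite f_val /=; lia.
  apply/forallP => a; apply/forallP => b.
  have /forallP /(_ b) /and3P [_ _ /eqP <-] := occ_f a.
  by rewrite -!f_val !nth_perm_seq.
rewrite size_perm_seq in hi.
have lt_n (a : 'I_k.+1) : i + a < n by have := ltn_ord a; lia.
exists [ffun a => Ordinal (lt_n a)]; apply/forallP => a; apply/forallP => b.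
rewrite !ffunE /=; apply/and3P; split.
- by apply/implyP; rewrite ltn_add2l.
- by apply/implyP => /andP[/eqP -> _]; rewrite addnS.
- move/forallP: occ_i => /(_ a) /forallP /(_ b).
  by rewrite -(nth_perm_seq pi (Ordinal (lt_n a))) -(nth_perm_seq pi (Ordinal (lt_n b))).
Qed.

Lemma one_dash0 : one_dash s ord0 = ord0.
Proof. by rewrite permE /one_dash_fun unlift_none. Qed.

Lemma one_dash_lift (a : 'I_k.+1) : one_dash s (lift ord0 a) = lift ord0 (s a).
Proof. by rewrite permE /one_dash_fun liftK. Qed.

Lemma occurs_dash_of_contains n (pi : 'S_n) :
  contains pi (one_dash s) one_dash_adj -> occurs_dash s (perm_seq pi).
Proof.
case/existsP => f /forallP occ_f; pose g j := val (f (inord j)).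
have f_val (a : 'I_k.+1) : val (f (lift ord0 a)) = g 1 + a.
  rewrite -[lift ord0 a]inord_val -/(g _) lift0 (@consecutive_values g 1 k.+2) ?subn1 //;
    last by rewrite ltn0Sn ltnS ltn_ord.
  move=> j j_gt0 hj; have /forallP /(_ (inord j.+1)) := occ_f (inord j).
  by rewrite /one_dash_adj !inordK ?(ltnW hj) ?eqxx -?lt0n ?j_gt0 //= => /and3P [_ /eqP].
apply/occurs_dashP; exists (f ord0), (g 1); split.
- have /forallP /(_ (lift ord0 ord0)) /and3P [/implyP lt_f _ _] := occ_f ord0.
  by rewrite -(addn0 (g 1)) -(f_val ord0); apply: lt_f.
- apply/andP; split.
    by rewrite size_perm_seq; have := ltn_ord (f (lift ord0 ord_max)); rewrite f_val /=; lia.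
  apply/forallP => a; apply/forallP => b.
  have /forallP /(_ (lift ord0 b)) /and3P [_ _ /eqP] := occ_f (lift ord0 a).
  by rewrite !one_dash_lift /= /bump /= !add1n ltnS => <-; rewrite -!f_val !nth_perm_seq.
apply/forallP => a.
have /forallP /(_ (lift ord0 a)) /and3P [_ _ /eqP] := occ_f ord0.
by rewrite one_dash0 one_dash_lift lift0 ltn0Sn -f_val !nth_perm_seq.
Qed.

Lemma contains_of_occurs_dash n (pi : 'S_n) :
  occurs_dash s (perm_seq pi) -> contains pi (one_dash s) one_dash_adj.
Proof.
case/occurs_dashP => p [i [lt_pi /andP[hi occ_i] below_p]]; rewrite size_perm_seq in hi.
have lt_n (a : 'I_k.+1) : i + a < n by have := ltn_ord a; lia.
have lt_p : p < n by lia.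
have nth_i (a : 'I_k.+1) : nth 0 (perm_seq pi) (i + a) = pi (Ordinal (lt_n a)).
  exact: (nth_perm_seq pi (Ordinal (lt_n a))).
have nth_p : nth 0 (perm_seq pi) p = pi (Ordinal lt_p).
  exact: (nth_perm_seq pi (Ordinal lt_p)).
apply/existsP.
exists [ffun x => if unlift ord0 x is Some a then Ordinal (lt_n a) else Ordinal lt_p].
apply/forallP => x; apply/forallP => y; rewrite !ffunE.
case: (unliftP ord0 x) => [a ->|->]; case: (unliftP ord0 y) => [b ->|->];
  rewrite ?liftK ?unlift_none /= ?one_dash0 ?one_dash_lift /= /bump /= ?add1n.
- apply/and3P; split.
  + by apply/implyP; rewrite ltnS ltn_add2l.
  + by apply/implyP => /andP[/eqP [->] _]; rewrite addnS.
  + by move/forallP: occ_i => /(_ a) /forallP /(_ b); rewrite ltnS !nth_i.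
- rewrite ltn0 eqbF_neg -leqNgt -nth_i -nth_p.
  by move/forallP: below_p => /(_ a) /ltnW.
- rewrite ltn0Sn -nth_i -nth_p; apply/and3P; split; first by lia.
    by rewrite /one_dash_adj andbF.
  by move/forallP: below_p => /(_ b) ->.
- by rewrite ltnn.
Qed.

Lemma contains_one_dash n (pi : 'S_n) :
  contains pi (one_dash s) one_dash_adj = occurs_dash s (perm_seq pi).
Proof. by apply/idP/idP; [apply: occurs_dash_of_contains | apply: contains_of_occurs_dash]. Qed.

End Translation.

Section FormalPowerSeries.
Local Open Scope ring_scope.

(* The coefficients of fps_exp G below N only involve those of G below N, so they
   can be computed in {poly rat}, where the derivative is available. *)
Definition fps_trunc (N : nat) (F : fps) : {poly rat} := \poly_(i < N) F i.

Lemma fps_mul_coef (F H : fps) (p q : {poly rat}) n :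
  (forall i, (i <= n)%N -> F i = p`_i) -> (forall i, (i <= n)%N -> H i = q`_i) ->
  fps_mul F H n = (p * q)`_n.
Proof.
move=> Fp Hq; rewrite /fps_mul coefM; apply: eq_bigr => i _.
by rewrite Fp ?Hq // ?leq_subr // -ltnS.
Qed.

Lemma fps_pow_coef (G : fps) N j n : (n < N)%N -> fps_pow G j n = (fps_trunc N G ^+ j)`_n.
Proof.
elim: j n => [|j IHj] n n_lt; first by rewrite /fps_pow /= /fps_one expr0 coef1.
rewrite /fps_pow iterS -/(fps_pow G j) exprS; apply: fps_mul_coef => i i_le.
  by rewrite coef_poly (leq_ltn_trans i_le n_lt).
by rewrite IHj // (leq_ltn_trans i_le n_lt).
Qed.

Lemma coef_expr_lt (p : {poly rat}) j n : p`_0 = 0 -> (n < j)%N -> (p ^+ j)`_n = 0.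
Proof.
move=> p0; elim: j n => [//|j IHj] n n_lt; rewrite exprS coefM; apply: big1 => -[[|i] hi] _ /=.
  by rewrite p0 mul0r.
by rewrite IHj ?mulr0 //; lia.
Qed.

Definition exp_trunc (G : fps) M N : {poly rat} :=
  \sum_(j < M) ((j`!)%:R)^-1 *: fps_trunc N G ^+ j.

Lemma fps_exp_coef (G : fps) M N n : G 0 = 0 -> (n < N)%N -> (n < M)%N ->
  fps_exp G n = (exp_trunc G M N)`_n.
Proof.
move=> G0 n_N n_M; rewrite /exp_trunc coef_sum /fps_exp.
rewrite (big_ord_widen M (fun j => fps_pow G j n / (j`!)%:R) n_M) big_mkcond /=.
apply: eq_bigr => j _; rewrite coefZ; case: ifP => [_|/negbT]; last rewrite -leqNgt => n_j.
  by rewrite (fps_pow_coef _ _ n_N) mulrC.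
by rewrite coef_expr_lt ?mulr0 // coef_poly (leq_ltn_trans (leq0n n) n_N).
Qed.

Lemma fact_neq0 m : ((m`!)%:R : rat) != 0.
Proof. by rewrite pnatr_eq0 -lt0n fact_gt0. Qed.

Lemma deriv_exp_trunc (G : fps) M N :
  (exp_trunc G M.+1 N)^`() = (fps_trunc N G)^`() * exp_trunc G M N.
Proof.
rewrite /exp_trunc raddf_sum big_ord_recl /= expr0 derivZ derivC scaler0 add0r.
rewrite mulr_sumr; apply: eq_bigr => i _.
rewrite derivZ /bump /= add1n deriv_exp /= -scalerAr -scaler_nat scalerA; congr (_ *: _).
rewrite factS natrM; field.
by rewrite fact_neq0 addrC natr1 pnatr_eq0.
Qed.

Lemma fps_exp_int_rec (B : fps) n :
  fps_exp (fps_int B) n.+1 *+ n.+1 = \sum_(i < n.+1) B i * fps_exp (fps_int B) (n - i)%N.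
Proof.
rewrite (@fps_exp_coef _ n.+2 n.+2) // -coef_deriv deriv_exp_trunc coefM; apply: eq_bigr => i _.
have n_i : (n - i <= n)%N := leq_subr i n.
rewrite (@fps_exp_coef _ n.+1 n.+2) ?ltnS ?(leq_trans n_i) //; congr (_ * _).
rewrite coef_deriv coef_poly /fps_int ltnS ltn_ord -mulr_natr.
by field; rewrite addrC natr1 pnatr_eq0.
Qed.

Lemma fps_eq_rec (B F H : fps) : F 0 = H 0 ->
  (forall n, F n.+1 *+ n.+1 = \sum_(i < n.+1) B i * F (n - i)%N) ->
  (forall n, H n.+1 *+ n.+1 = \sum_(i < n.+1) B i * H (n - i)%N) -> F = H.
Proof.
move=> FH0 Frec Hrec; apply: functional_extensionality => n.
elim: n {-2}n (leqnn n) => [|n IHn] m; first by rewrite leqn0 => /eqP ->.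
rewrite leq_eqVlt => /orP[/eqP ->|]; last exact: IHn.
apply/eqP; rewrite -(eqr_pMn2r (ltn0Sn n)) Frec Hrec; apply/eqP/eq_bigr => i _.
by rewrite IHn // leq_subr.
Qed.

Lemma egf_binomial_rec (a b : nat -> nat) n :
  a n.+1 = (\sum_(i < n.+1) 'C(n, i) * b i * a (n - i))%N ->
  egf a n.+1 *+ n.+1 = \sum_(i < n.+1) egf b i * egf a (n - i)%N.
Proof.
move=> arec; rewrite /egf arec natr_sum -[_ *+ n.+1]mulr_natr !mulr_suml.
apply: eq_bigr => -[i i_le] _ /=.
have nCi : ('C(n, i)%:R : rat) != 0 by rewrite pnatr_eq0 -lt0n bin_gt0.
rewrite factS -(bin_fact (i_le : (i <= n)%N)) !natrM; field.
by rewrite nCi !fact_neq0 /= addrC natr1 pnatr_eq0.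
Qed.

Lemma egf_exp_int (a b : nat -> nat) : a 0 = 1%N ->
  (forall n, a n.+1 = (\sum_(i < n.+1) 'C(n, i) * b i * a (n - i))%N) ->
  egf a = fps_exp (fps_int (egf b)).
Proof.
move=> a0 arec; apply: (fps_eq_rec (B := egf b)) => [|n|n].
- by rewrite /egf /fps_exp a0 big_ord1 /= /fps_one divr1.
- exact: egf_binomial_rec.
- exact: fps_exp_int_rec.
Qed.

End FormalPowerSeries.

Section OneDashRecurrence.
Variables (k : nat) (s : 'S_k.+1).

Lemma order_invariant_occurs_consec : order_invariant (predC (occurs_consec s)).
Proof. by move=> f t f_mono /=; rewrite occurs_consec_map. Qed.

Lemma order_invariant_occurs_dash : order_invariant (predC (occurs_dash s)).
Proof. by move=> f t f_mono /=; rewrite occurs_dash_map. Qed.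

Lemma count_avoid_consec V : uniq V ->
  count (predC (occurs_consec s)) (permutations V) = alpha s consec_adj (size V).
Proof.
move=> uV; rewrite (alpha_count_permutations (@contains_consec k s (size V))).
exact: count_permutations_invariant order_invariant_occurs_consec uV.
Qed.

Lemma count_avoid_dash V : uniq V ->
  count (predC (occurs_dash s)) (permutations V) = alpha (one_dash s) one_dash_adj (size V).
Proof.
move=> uV; rewrite (alpha_count_permutations (@contains_one_dash k s (size V))).
exact: count_permutations_invariant order_invariant_occurs_dash uV.
Qed.

Lemma alpha_one_dash_rec n :
  alpha (one_dash s) one_dash_adj n.+1 =
  \sum_(i < n.+1) 'C(n, i) * alpha s consec_adj i * alpha (one_dash s) one_dash_adj (n - i).
Proof.
have uR : uniq (0 :: iota 1 n) by rewrite -/(iota 0 n.+1) iota_uniq.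
rewrite -[n.+1](size_iota 0) -count_avoid_dash ?iota_uniq //= (count_permutations_cons uR
  (P1 := predC (occurs_dash s)) (P2 := predC (occurs_consec s))); last first.
  move=> u w uwR /=; rewrite occurs_dash_cat_min ?negb_or // => x.
  by rewrite (perm_mem uwR) mem_iota; lia.
pose G j := alpha (one_dash s) one_dash_adj (n - j) * alpha s consec_adj j.
rewrite (eq_big_seq (fun q => G (size q.2))) => [|q hq]; last first.
  have q_iota := bipartitions_perm hq.
  have : uniq (q.1 ++ q.2) by rewrite (perm_uniq q_iota) iota_uniq.
  rewrite cat_uniq => /and3P [uq1 _ uq2].
  have size_q1 : size q.1 = n - size q.2.
    by rewrite -(size_iota 1 n) -(perm_size q_iota) size_cat addnK.
  by rewrite count_avoid_dash // count_avoid_consec // size_q1.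
rewrite sum_bipartitions size_iota; apply: eq_bigr => i _.
by rewrite /G mulnA mulnAC.
Qed.

End OneDashRecurrence.

Theorem mainTheorem1 (k : nat) (hk : (0 < k)%N) (s : 'S_k) :
  egf (alpha (one_dash s) one_dash_adj) =
  fps_exp (fps_int (egf (alpha s consec_adj))).
Proof.
case: k hk s => [//|k] _ s.
apply: egf_exp_int; first by rewrite (alpha_count_permutations (@contains_one_dash k s 0)).
exact: alpha_one_dash_rec.
Qed.
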